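(* Let $\Theta$ be a finite set, $b$ a belief function on $\Theta$ with mass function $m_b$, and $\emptyset \subsetneq A \subseteq \Theta$. The mass vector of the $L_2$ conditional belief function of $b$ with respect to $A$ in the mass space, namely the vector with entries $m_b(B) + \frac{1-b(A)}{2^{|A|}-1}$ for $\emptyset\subsetneq B\subseteq A$ and $0$ elsewhere, is the center of mass $\frac{1}{2^{|A|}-1}\sum_{\emptyset\subsetneq B\subseteq A}\vec{m}[b]|_{L_1}^B A$ of the simplex $\mathcal{M}_{L_1,A}[b]=Cl(\vec{m}[b]|_{L_1}^B A,\ \emptyset\subsetneq B\subseteq A)$ of $L_1$ conditional belief functions of $b$ with respect to $A$ in the mass space, where the vertex $\vec{m}[b]|_{L_1}^B A$ is the mass vector $\vec{m}_a\in\mathcal{M}_A$ with $m_a(B)=m_b(B)+1-b(A)$ and $m_a(X)=m_b(X)$ for all $\emptyset\subsetneq X\subsetneq A$, $X\neq B$.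
   Context: A mass function on a finite set $\Theta$ is $m:2^\Theta\to[0,1]$ with $m(\emptyset)=0$ and $\sum_{A\subseteq\Theta} m(A)=1$; the associated belief function is $b(A)=\sum_{B\subseteq A} m_b(B)$. The mass vector of $b$ is $\vec{m}_b=[m_b(B)]_{\emptyset\subsetneq B\subseteq\Theta}\in\mathbb{R}^{2^{|\Theta|}-1}$. For $\emptyset\subsetneq A\subseteq\Theta$, $\mathcal{M}_A$ is the set of mass vectors of belief functions all of whose focal elements are subsets of $A$. The $L_2$ conditional belief function is the minimizer of $\|\vec{m}_b-\vec{m}_a\|_{L_2}$ (Euclidean distance of mass vectors) over $\vec{m}_a\in\mathcal{M}_A$, and the $L_1$ conditional belief functions are the minimizers of $\sum_{\emptyset\subsetneq B\subseteq\Theta}|m_b(B)-m_a(B)|$ over $\vec{m}_a\in\mathcal{M}_A$. $Cl(\cdot)$ denotes convex hull. *)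

(* The mass space R^(2^|Theta|-1) is represented by
   {ffun {set T} -> R} whose coordinate at set0 is ignored by the norms and
   forced to 0 for mass vectors. *)
From HB Require Import structures.
From mathcomp Require Import all_boot all_order all_algebra.
Set Implicit Arguments. Unset Strict Implicit. Unset Printing Implicit Defensive.
Import Order.TTheory GRing.Theory Num.Theory.
Local Open Scope ring_scope.

Section Defs.
Variables (R : rcfType) (T : finType).

Definition is_mass (m : {ffun {set T} -> R}) : Prop :=
  m set0 = 0 /\ (forall B, 0 <= m B) /\ \sum_(B : {set T}) m B = 1.

Definition belief (m : {ffun {set T} -> R}) (A : {set T}) : R :=
  \sum_(B : {set T} | B \subset A) m B.

Definition in_MA (A : {set T}) (ma : {ffun {set T} -> R}) : Prop :=
  is_mass ma /\ (forall X : {set T}, ma X != 0 -> X \subset A).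

Definition L2dist (m1 m2 : {ffun {set T} -> R}) : R :=
  Num.sqrt (\sum_(B : {set T} | B != set0) (m1 B - m2 B) ^+ 2).

Definition is_L2_conditional (mb : {ffun {set T} -> R}) (A : {set T})
    (ma : {ffun {set T} -> R}) : Prop :=
  in_MA A ma /\ (forall ma' : {ffun {set T} -> R}, in_MA A ma' ->
                   L2dist mb ma <= L2dist mb ma').

Definition L2_formula (mb : {ffun {set T} -> R}) (A : {set T}) : {ffun {set T} -> R} :=
  [ffun X : {set T} => if (X != set0) && (X \subset A)
     then mb X + (1 - belief mb A) / ((2 ^ #|A|)%:R - 1) else 0].

Definition L1_vertex (mb : {ffun {set T} -> R}) (A B : {set T}) : {ffun {set T} -> R} :=
  [ffun X : {set T} => if (X != set0) && (X \subset A)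
     then mb X + (if X == B then 1 - belief mb A else 0) else 0].

Definition L1_barycenter (mb : {ffun {set T} -> R}) (A : {set T}) : {ffun {set T} -> R} :=
  [ffun X : {set T} => ((2 ^ #|A|)%:R - 1)^-1 *
     \sum_(B : {set T} | (B != set0) && (B \subset A)) L1_vertex mb A B X].

End Defs.

(* Write N = 2^|A| - 1 for the number of nonempty subsets of A and
   d = (1 - b(A)) / N.  Averaging the N vertices of the L1 simplex spreads the
   missing mass 1 - b(A) evenly, which is the formula m_b + d on A.  For the L2
   claim, any m_a in M_A differs from m_b + d on A by a vector whose entries
   sum to 1 - 1 = 0, hence orthogonal to the constant offset d; by Pythagoras
   ||m_b - m_a||^2 = ||m_b - (m_b + d)||^2 + ||(m_b + d) - m_a||^2, so
   m_b + d is the unique minimiser. *)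
From HB Require Import structures.
From mathcomp Require Import all_boot all_order all_algebra.
From mathcomp Require Import ring.
Import Order.TTheory GRing.Theory Num.Theory.
Local Open Scope ring_scope.

Lemma sum_sqr_const_offset (R : comPzRingType) (I : finType) (P : pred I)
    (x y z : I -> R) (k : R) :
  (forall i, P i -> x i - y i = k) -> \sum_(i | P i) (y i - z i) = 0 ->
  \sum_(i | P i) (x i - z i) ^+ 2 =
    \sum_(i | P i) (x i - y i) ^+ 2 + \sum_(i | P i) (y i - z i) ^+ 2.
Proof.
move=> xyk yz0.
transitivity (\sum_(i | P i) ((x i - y i) ^+ 2 + (y i - z i) ^+ 2 + 2 * k * (y i - z i))).
  by apply: eq_bigr => i Pi; rewrite -(xyk i Pi); ring.
by rewrite big_split /= -mulr_sumr yz0 mulr0 addr0 big_split.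
Qed.

Section MassSpace.
Variables (R : rcfType) (T : finType).
Implicit Types (m ma : {ffun {set T} -> R}) (A X : {set T}).

Lemma sum1_nonempty_subsets A :
  \sum_(B : {set T} | (B != set0) && (B \subset A)) (1 : R) = (2 ^ #|A|)%:R - 1.
Proof.
have -> : (2 ^ #|A|)%:R = \sum_(B : {set T} | B \subset A) (1 : R).
  by rewrite -card_powerset -sum1_card natr_sum; apply: eq_bigl => B; rewrite inE.
rewrite [in RHS](bigD1 set0) ?sub0set //= addrC addrK.
by apply: eq_bigl => B; rewrite andbC.
Qed.

Lemma sumr_const_nonempty_subsets A (c : R) :
  \sum_(B : {set T} | (B != set0) && (B \subset A)) c = c * ((2 ^ #|A|)%:R - 1).
Proof. by rewrite -sum1_nonempty_subsets mulr_sumr; apply: eq_bigr => B _; rewrite mulr1. Qed.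

Lemma nonempty_subsets_gt0 A : A != set0 -> 0 < (2 ^ #|A|)%:R - 1 :> R.
Proof.
rewrite -card_gt0 subr_gt0 -[1 : R]/(1%:R) ltr_nat => A_gt0.
by rewrite -{1}(expn0 2) ltn_exp2l.
Qed.

Lemma belief_nonempty m A :
  m set0 = 0 -> belief m A = \sum_(B | (B != set0) && (B \subset A)) m B.
Proof.
move=> m0; rewrite /belief (bigD1 set0) ?sub0set //= m0 add0r.
by apply: eq_bigl => B; rewrite andbC.
Qed.

Lemma belief_supported {m A} :
  (forall X, m X != 0 -> X \subset A) -> belief m A = \sum_B m B.
Proof.
move=> suppA; rewrite [RHS](bigID (fun B : {set T} => B \subset A)) /=.
rewrite [X in _ + X]big1 ?addr0 //.
by move=> B /negP notBA; apply/eqP/negPn/negP => /suppA.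
Qed.

Lemma belief_le1 m A : is_mass m -> belief m A <= 1.
Proof.
move=> [_ [m_ge0 m_sum]]; rewrite -m_sum /belief.
by rewrite [X in _ <= X](bigID (fun B : {set T} => B \subset A)) /= lerDl sumr_ge0.
Qed.

Lemma belief_in_MA m A : in_MA A m -> belief m A = 1.
Proof. by move=> [[_ [_ m_sum]] suppA]; rewrite belief_supported. Qed.

Lemma in_MA_out {m A X} : in_MA A m -> ~~ ((X != set0) && (X \subset A)) -> m X = 0.
Proof.
move=> [[m0 _] suppA]; case: eqP => [-> _ | _ /= notXA]; first exact: m0.
by apply/eqP/negPn/negP => /suppA XA; rewrite XA in notXA.
Qed.

Lemma in_MA_eq {A m1 m2} :
  in_MA A m1 -> in_MA A m2 ->
  (forall X, (X != set0) && (X \subset A) -> m1 X = m2 X) -> m1 = m2.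
Proof.
move=> m1A m2A eqA; apply/ffunP => X.
case: (boolP ((X != set0) && (X \subset A))) => [/eqA // | XA].
by rewrite (in_MA_out m1A XA) (in_MA_out m2A XA).
Qed.

Definition sqdist (m1 m2 : {ffun {set T} -> R}) : R :=
  \sum_(B | B != set0) (m1 B - m2 B) ^+ 2.

Lemma sqdist_ge0 m1 m2 : 0 <= sqdist m1 m2.
Proof. by apply: sumr_ge0 => B _; apply: sqr_ge0. Qed.

Lemma L2dist_le m m1 m2 : (L2dist m m1 <= L2dist m m2) = (sqdist m m1 <= sqdist m m2).
Proof. exact/ler_sqrt/sqdist_ge0. Qed.

Section Conditioning.
Variables (mb : {ffun {set T} -> R}) (A : {set T}).
Hypotheses (hmb : is_mass mb) (hA : A != set0).

Let N_gt0 : 0 < (2 ^ #|A|)%:R - 1 :> R := nonempty_subsets_gt0 A hA.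
Let N_neq0 : (2 ^ #|A|)%:R - 1 != 0 :> R := lt0r_neq0 N_gt0.

Lemma L2_formula_barycenter : L2_formula mb A = L1_barycenter mb A.
Proof.
apply/ffunP => X; rewrite !ffunE; under eq_bigr => B _ do rewrite ffunE.
case: ifP => XA; last by rewrite big1 ?mulr0.
rewrite big_split /= sumr_const_nonempty_subsets.
rewrite (bigD1 X) //= eqxx big1 => [|B /andP[_ /negbTE]]; last by rewrite eq_sym => ->.
by rewrite addr0 mulrDr mulrCA mulVf // mulr1 [_^-1 * _]mulrC.
Qed.

Lemma sum_L2_formula :
  \sum_(B | (B != set0) && (B \subset A)) L2_formula mb A B = 1.
Proof.
rewrite (eq_bigr (fun B => mb B + (1 - belief mb A) / ((2 ^ #|A|)%:R - 1))) => [|B BA];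
  last by rewrite ffunE BA.
rewrite big_split /= -belief_nonempty; last by case: hmb.
by rewrite sumr_const_nonempty_subsets mulfVK // addrC subrK.
Qed.

Lemma L2_formula_in_MA : in_MA A (L2_formula mb A).
Proof.
have c0 : L2_formula mb A set0 = 0 by rewrite ffunE eqxx.
have suppA X : L2_formula mb A X != 0 -> X \subset A.
  by rewrite ffunE; case: ifP => [/andP[]//|]; rewrite eqxx.
split=> //; split=> //; split.
- move=> B; rewrite ffunE; case: ifP => // _; case: (hmb) => _ [mb_ge0 _].
  by rewrite addr_ge0 ?mb_ge0 ?divr_ge0 ?(ltW N_gt0) // subr_ge0 belief_le1.
- by rewrite -(belief_supported suppA) belief_nonempty // sum_L2_formula.
Qed.

Lemma sqdist_L2_formula ma : in_MA A ma ->
  sqdist mb ma = sqdist mb (L2_formula mb A) +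
    \sum_(B | (B != set0) && (B \subset A)) (L2_formula mb A B - ma B) ^+ 2.
Proof.
move=> maA; have cA := L2_formula_in_MA.
rewrite /sqdist (bigID (fun B : {set T} => B \subset A)) /=.
rewrite [X in _ = X + _](bigID (fun B : {set T} => B \subset A)) /= addrAC.
congr (_ + _).
- apply: sum_sqr_const_offset => [B BA | ].
    by rewrite ffunE BA opprD addrA subrr add0r.
  rewrite sumrB -!belief_nonempty; first by rewrite !belief_in_MA ?subrr.
  + by case: maA => [[]].
  + by case: cA => [[]].
- apply: eq_bigr => B /andP[_ notBA].
  have outB : ~~ ((B != set0) && (B \subset A)) by rewrite (negbTE notBA) andbF.
  by rewrite (in_MA_out maA outB) (in_MA_out cA outB).
Qed.

Lemma is_L2_conditionalE ma : is_L2_conditional mb A ma <-> ma = L2_formula mb A.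
Proof.
have cA := L2_formula_in_MA.
split=> [[maA ma_min] | ->].
- have := ma_min _ cA; rewrite L2dist_le sqdist_L2_formula // gerDl => dist_le0.
  have dist0 : \sum_(B | (B != set0) && (B \subset A)) (L2_formula mb A B - ma B) ^+ 2 = 0.
    by apply/eqP; rewrite eq_le dist_le0 sumr_ge0 // => B _; apply: sqr_ge0.
  apply: (in_MA_eq maA cA) => X /(psumr_eq0P (fun B _ => sqr_ge0 _) dist0).
  by move/eqP; rewrite sqrf_eq0 subr_eq0 => /eqP ->.
- split=> // ma' ma'A; rewrite L2dist_le (sqdist_L2_formula _ ma'A) lerDl.
  by apply: sumr_ge0 => B _; apply: sqr_ge0.
Qed.

End Conditioning.
End MassSpace.

Theorem theorem4 (R : rcfType) (T : finType) (mb : {ffun {set T} -> R})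
    (A : {set T}) (hmb : is_mass mb) (hA : A != set0) :
  L2_formula mb A = L1_barycenter mb A /\
  (forall ma : {ffun {set T} -> R},
      is_L2_conditional mb A ma <-> ma = L1_barycenter mb A).
Proof.
split; first exact: L2_formula_barycenter.
by move=> ma; rewrite -L2_formula_barycenter //; apply: is_L2_conditionalE.
Qed.
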